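(* Let $x,y$ be real numbers with $y\neq 0$ such that either $x/y> 1$ or $x/y\le -(\sqrt2+1)^2$. Then $$\sum_{k = 1}^\infty \frac{(27xy)^k }{k(x + y)^{2k} \binom{3k}k} = \frac{\sqrt[3]{xy} }{x - y}\left(2\sqrt 3\big(\sqrt[3]{x} + \sqrt[3]{y} \big)\arctan \bigg( \frac{\sqrt 3\sqrt[3]{y}}{2\sqrt[3]{x} - \sqrt[3]{y} } \bigg)+ \big(\sqrt[3]{x} - \sqrt[3]{y} \big)\log \bigg( \frac{x + y}{\big(\sqrt[3]{x} + \sqrt[3]{y} \big)^3 } \bigg)\right).$$
   Context: $\sqrt[3]{t}$ denotes the real cube root of the real number $t$ (negative for $t<0$). *)

From Stdlib Require Import Reals.
From Coquelicot Require Import Coquelicot.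
Open Scope R_scope.

Definition cbrt (t : R) : R :=
  match Rlt_dec 0 t with
  | left _ => Rpower t (1/3)
  | right _ =>
    match Rlt_dec t 0 with
    | left _ => - Rpower (- t) (1/3)
    | right _ => 0
    end
  end.

(* k-th term of the series, k >= 1; Binomial.C is the real-valued binomial. *)
Definition term (x y : R) (k : nat) : R :=
  (27 * x * y) ^ k / (INR k * (x + y) ^ (2 * k) * Binomial.C (3 * k) k).

(* With z = 27xy/(x+y)^2, the identity 1/(k C(3k,k)) = B(k-1, 2k+1) = int_0^1 t^(k-1) (1-t)^(2k) dt
   turns the series into int_0^1 z (1-t)^2 / (1 - z t (1-t)^2) dt: the geometric series is summed under
   the integral, the remainders being dominated by (27/4)^n B(n, 2n) -> 0 as long as -27/4 <= z < 27/4,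
   which is exactly the hypothesis on x/y.  Writing x/y = r^3, the cubic denominator factors as
   ((r+1)^2 - 3rt) times a positive quadratic, so partial fractions give an elementary primitive
   made of two logarithms and one arctangent.  Its arctangent values at t = 1 and t = 0 combine
   into 3 atan (sqrt 3/(2r-1)); this identity is proved by showing that the defect has zero
   derivative in r and vanishes at one point of each branch r > 1, r < -1. *)

From Stdlib Require Import Factorial Reals Lra Lia Psatz.
From Coquelicot Require Import Coquelicot.
Open Scope R_scope.

(* Coquelicot states equalities in the carriers of its structures, where [ring] and [field] do not apply. *)
Ltac R_eq := match goal with |- ?a = ?b => change (@eq R a b) end.

Lemma is_RInt_lincomb (f g : R -> R) (a b c d If Ig : R) :
  is_RInt f a b If -> is_RInt g a b Ig ->
  is_RInt (fun t => c * f t + d * g t) a b (c * If + d * Ig).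
Proof.
  intros Hf Hg.
  exact (is_RInt_plus _ _ _ _ _ _ (is_RInt_scal _ _ _ c _ Hf) (is_RInt_scal _ _ _ d _ Hg)).
Qed.

Lemma is_RInt_R_unique (f : R -> R) (a b l1 l2 : R) :
  is_RInt f a b l1 -> is_RInt f a b l2 -> l1 = l2.
Proof.
  intros H1 H2.
  now rewrite <- (is_RInt_unique (V := R_CompleteNormedModule) _ _ _ _ H1), (is_RInt_unique _ _ _ _ H2).
Qed.

Lemma is_series_telescope (a E : nat -> R) :
  (forall n, a n = E n - E (S n)) -> is_lim_seq E 0 -> is_series a (E O).
Proof.
  intros Ha HE.
  assert (Hsum : forall N, sum_n a N = E O - E (S N)).
  { induction N as [|N IH].
    - now rewrite sum_O, Ha.
    - rewrite sum_Sn, IH, Ha. unfold plus; simpl. ring. }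
  enough (H : is_lim_seq (sum_n a) (E O)) by exact H.
  apply (is_lim_seq_ext (fun N => E O - E (S N))); [now intros N; rewrite Hsum|].
  replace (Finite (E O)) with (Rbar_minus (E O) 0) by (simpl; f_equal; ring).
  apply is_lim_seq_minus'; [apply is_lim_seq_const|].
  now apply (is_lim_seq_incr_1 E 0).
Qed.

Lemma is_lim_seq_0_of_pow (u : nat -> R) (k : nat) :
  (forall n, 0 <= u n) -> is_lim_seq (fun n => u n ^ S k) 0 -> is_lim_seq u 0.
Proof.
  intros Hu H. apply is_lim_seq_spec in H. apply is_lim_seq_spec. intros eps.
  destruct (H (mkposreal _ (pow_lt _ (S k) (cond_pos eps)))) as [N HN].
  exists N. intros n Hn. specialize (HN n Hn). cbn [pos] in HN.
  rewrite Rminus_0_r, Rabs_pos_eq in HN by (apply pow_le, Hu).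
  rewrite Rminus_0_r, Rabs_pos_eq by apply Hu.
  destruct (Rlt_or_le (u n) eps) as [Hlt|Hle]; [exact Hlt|].
  pose proof (pow_incr eps (u n) (S k) (conj (Rlt_le _ _ (cond_pos eps)) Hle)).
  lra.
Qed.

Lemma is_derive_0_eq (f : R -> R) (a b : R) :
  (forall u, Rmin a b <= u <= Rmax a b -> is_derive f u 0) -> f b = f a.
Proof.
  intros Hder.
  destruct (MVT_gen f a b (fun _ => 0)) as [c [_ Hc]].
  - intros u Hu. apply Hder. lra.
  - intros u Hu. apply continuity_pt_filterlim, (ex_derive_continuous f).
    exists 0. now apply Hder.
  - lra.
Qed.

Lemma is_derive_atan_sqrt3 (f : R -> R) (x df : R) : is_derive f x df ->
  is_derive (fun t => atan (sqrt 3 * f t)) x (sqrt 3 * df / (1 + 3 * f x ^ 2)).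
Proof.
  intros Hf.
  assert (H := is_derive_comp atan (fun t => sqrt 3 * f t) x _ _
    (is_derive_atan (sqrt 3 * f x)) (is_derive_scal f x (sqrt 3) df Hf)).
  replace (sqrt 3 * df / (1 + 3 * f x ^ 2)) with (scal (sqrt 3 * df) (/ (1 + (sqrt 3 * f x)²)));
    [exact H|].
  assert (E : (sqrt 3 * f x)² = 3 * f x ^ 2) by (rewrite Rsqr_mult, Rsqr_sqrt by lra; unfold Rsqr; ring).
  change (scal ?a ?b) with (a * b). now rewrite E.
Qed.

Lemma pow2_pos (x : R) : x <> 0 -> 0 < x ^ 2.
Proof. intros Hx. rewrite <- Rsqr_pow2. now apply Rsqr_pos_lt. Qed.

(** * Beta integrals *)

Definition beta (m n : nat) : R := INR (fact m) * INR (fact n) / INR (fact (m + n + 1)).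

Lemma beta_0_r (m : nat) : beta m 0 = / INR (S m).
Proof.
  unfold beta. rewrite Nat.add_0_r, Nat.add_1_r, fact_simpl, mult_INR. change (INR (fact 0)) with 1.
  field. split; [apply not_0_INR; lia | apply INR_fact_neq_0].
Qed.

Lemma beta_S_r (m n : nat) : beta m (S n) = INR (S n) / INR (S m) * beta (S m) n.
Proof.
  unfold beta. replace (S m + n + 1)%nat with (m + S n + 1)%nat by lia.
  rewrite !fact_simpl, !mult_INR.
  field. repeat split; try apply INR_fact_neq_0; apply not_0_INR; lia.
Qed.

Lemma is_RInt_beta (m n : nat) : is_RInt (fun t => t ^ m * (1 - t) ^ n) 0 1 (beta m n).
Proof.
  revert m; induction n as [|n IH]; intros m.
  - rewrite beta_0_r.
    replace (/ INR (S m)) with (1 ^ S m / INR (S m) - 0 ^ S m / INR (S m))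
      by (rewrite pow1, pow_i by lia; field; apply not_0_INR; lia).
    apply (is_RInt_derive (fun t => t ^ S m / INR (S m))).
    + intros t _. auto_derive; [easy|].
      change (match m with 0%nat => 1 | S _ => INR m + 1 end) with (INR (S m)).
      field. apply not_0_INR. lia.
    + intros t _. apply (ex_derive_continuous (fun t => t ^ m * (1 - t) ^ 0)). auto_derive. easy.
  - (* integration by parts against F t = t^(m+1) (1-t)^(n+1), which vanishes at 0 and 1 *)
    set (F := fun t => t ^ S m * (1 - t) ^ S n).
    assert (HF : is_RInt (fun t => INR (S m) * (t ^ m * (1 - t) ^ S n)
                                   + - INR (S n) * (t ^ S m * (1 - t) ^ n)) 0 1 (F 1 - F 0)).
    { apply (is_RInt_derive F).
      - intros t _. unfold F. auto_derive; [easy|].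
        change (match m with 0%nat => 1 | S _ => INR m + 1 end) with (INR (S m)).
        change (match n with 0%nat => 1 | S _ => INR n + 1 end) with (INR (S n)).
        rewrite <- !tech_pow_Rmult. unfold Rminus. ring.
      - intros t _. apply (ex_derive_continuous (fun t => INR (S m) * (t ^ m * (1 - t) ^ S n)
                                   + - INR (S n) * (t ^ S m * (1 - t) ^ n))). auto_derive. easy. }
    replace (beta m (S n)) with (/ INR (S m) * (F 1 - F 0) + INR (S n) / INR (S m) * beta (S m) n).
    + apply (is_RInt_ext (fun t => / INR (S m) * (INR (S m) * (t ^ m * (1 - t) ^ S n)
                                   + - INR (S n) * (t ^ S m * (1 - t) ^ n))
                                   + INR (S n) / INR (S m) * (t ^ S m * (1 - t) ^ n))).
      * intros t _. R_eq. field. apply not_0_INR. lia.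
      * apply is_RInt_lincomb; [exact HF | apply IH].
    + unfold F. rewrite beta_S_r, Rminus_diag, !pow_i by lia. ring.
Qed.

(** * Summing the geometric series under the integral *)

Lemma mul_sqr_1m_bounds (t : R) : 0 <= t <= 1 -> 0 <= t * (1 - t) ^ 2 <= 4 / 27.
Proof.
  intros Ht. split.
  - apply Rmult_le_pos; [lra | apply pow2_ge_0].
  - assert (0 <= (t - 1/3) ^ 2 * (4/3 - t)) by (apply Rmult_le_pos; [apply pow2_ge_0 | lra]).
    nra.
Qed.

Definition beta_bound (n : nat) : R := (27/4) ^ n * beta n (2 * n).

Lemma beta_bound_nonneg (n : nat) : 0 <= beta_bound n.
Proof.
  unfold beta_bound, beta. apply Rmult_le_pos; [apply pow_le; lra|].
  apply Rmult_le_pos; [apply Rmult_le_pos; apply pos_INR|].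
  apply Rlt_le, Rinv_0_lt_compat, INR_fact_lt_0.
Qed.

Lemma beta_bound_S (n : nat) :
  beta_bound (S n)
  = beta_bound n * (9 * (INR n + 1) * (2 * INR n + 1) / (2 * (3 * INR n + 4) * (3 * INR n + 2))).
Proof.
  unfold beta_bound, beta.
  replace (2 * S n)%nat with (S (S (2 * n))) by lia.
  replace (S n + S (S (2 * n)) + 1)%nat with (S (S (S (n + 2 * n + 1)))) by lia.
  rewrite !fact_simpl, !mult_INR, !S_INR, !plus_INR, !mult_INR.
  simpl pow. simpl (INR 2). simpl (INR 1).
  assert (0 <= INR n) by apply pos_INR.
  field. repeat split; try apply INR_fact_neq_0; lra.
Qed.

Lemma beta_bound_cube_le (n : nat) : beta_bound n ^ 3 * INR (S n) <= 1.
Proof.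
  induction n as [|n IH].
  - unfold beta_bound, beta. simpl. lra.
  - rewrite beta_bound_S, !S_INR. rewrite S_INR in IH.
    set (m := INR n) in *. set (q := 9 * (m + 1) * (2 * m + 1) / (2 * (3 * m + 4) * (3 * m + 2))).
    assert (0 <= m) by apply pos_INR.
    assert (Hq : q ^ 3 * (m + 1 + 1) <= m + 1).
    { unfold q. unfold Rdiv. rewrite Rpow_mult_distr, pow_inv.
      apply Rmult_le_reg_r with ((2 * (3 * m + 4) * (3 * m + 2)) ^ 3); [apply pow_lt; nra|].
      field_simplify; [|nra].
      assert (Hpow : forall k, 0 <= m ^ k) by (intros; apply pow_le; lra).
      pose proof (Hpow 2%nat). pose proof (Hpow 3%nat). pose proof (Hpow 4%nat).
      pose proof (Hpow 5%nat). pose proof (Hpow 6%nat). lra. }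
    assert (0 <= beta_bound n ^ 3) by (apply pow_le, beta_bound_nonneg).
    replace ((beta_bound n * q) ^ 3 * (m + 1 + 1)) with (beta_bound n ^ 3 * (q ^ 3 * (m + 1 + 1))) by ring.
    apply Rle_trans with (beta_bound n ^ 3 * (m + 1)); [apply Rmult_le_compat_l|]; assumption.
Qed.

Lemma beta_bound_lim : is_lim_seq beta_bound 0.
Proof.
  apply (is_lim_seq_0_of_pow _ 2); [apply beta_bound_nonneg|].
  apply (is_lim_seq_le_le (fun _ => 0) _ (fun n => / INR (S n))).
  - intros n. split; [apply pow_le, beta_bound_nonneg|].
    pose proof (beta_bound_cube_le n). pose proof (lt_0_INR (S n) (Nat.lt_0_succ n)).
    apply (Rmult_le_reg_r (INR (S n))); [assumption|]. rewrite Rinv_l; lra.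
  - apply is_lim_seq_const.
  - apply (is_lim_seq_incr_1 (fun n => / INR n) 0).
    replace (Finite 0) with (Rbar_inv p_infty) by reflexivity.
    apply is_lim_seq_inv; [apply is_lim_seq_INR | discriminate].
Qed.

Section GeometricUnderIntegral.

Variable z : R.
Hypothesis Hz : -27/4 <= z < 27/4.

Definition geom_ratio (t : R) : R := z * t * (1 - t) ^ 2.
Definition integrand (t : R) : R := z * (1 - t) ^ 2 / (1 - geom_ratio t).
Definition denom_lb : R := Rmin 1 (1 - 4 * z / 27).

Lemma denom_lb_pos : 0 < denom_lb.
Proof. unfold denom_lb. apply Rmin_glb_lt; lra. Qed.

Lemma denom_lb_le (t : R) : 0 <= t <= 1 -> denom_lb <= 1 - geom_ratio t.
Proof.
  intros Ht. destruct (mul_sqr_1m_bounds t Ht). unfold geom_ratio, denom_lb.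
  destruct (Rle_or_lt z 0).
  - apply Rle_trans with 1; [apply Rmin_l | nra].
  - apply Rle_trans with (1 - 4 * z / 27); [apply Rmin_r | nra].
Qed.

Lemma denom_pos (t : R) : 0 <= t <= 1 -> 0 < 1 - geom_ratio t.
Proof. intros Ht. pose proof (denom_lb_le t Ht). pose proof denom_lb_pos. lra. Qed.

Lemma integrand_continuous (t : R) : geom_ratio t <> 1 -> continuous integrand t.
Proof.
  intros H. apply (ex_derive_continuous integrand).
  unfold integrand, geom_ratio in *. auto_derive. intros E. apply H. lra.
Qed.

Definition remainder (n : nat) : R := RInt (fun t => integrand t * geom_ratio t ^ n) 0 1.

Lemma remainder_correct (n : nat) :
  is_RInt (fun t => integrand t * geom_ratio t ^ n) 0 1 (remainder n).
Proof.
  apply (RInt_correct (V := R_CompleteNormedModule)), ex_RInt_continuous.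
  intros t Ht. rewrite Rmin_left, Rmax_right in Ht by lra.
  pose proof (denom_pos t Ht).
  apply (ex_derive_continuous (fun t => integrand t * geom_ratio t ^ n)).
  unfold integrand, geom_ratio in *. auto_derive. lra.
Qed.

Lemma remainder_sub_S (n : nat) :
  remainder n - remainder (S n) = z ^ S n * beta n (2 * n + 2).
Proof.
  eapply is_RInt_R_unique;
    [exact (is_RInt_minus _ _ _ _ _ _ (remainder_correct n) (remainder_correct (S n)))|].
  apply (is_RInt_ext (fun t => z ^ S n * (t ^ n * (1 - t) ^ (2 * n + 2)))).
  - intros t Ht. rewrite Rmin_left, Rmax_right in Ht by lra.
    assert (0 < 1 - geom_ratio t) by (apply denom_pos; lra).
    unfold integrand, geom_ratio in *. rewrite pow_add, pow_mult, <- !tech_pow_Rmult, !Rpow_mult_distr.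
    change (minus ?a ?b) with (a - b). R_eq. field. lra.
  - exact (is_RInt_scal _ _ _ (z ^ S n) _ (is_RInt_beta n (2 * n + 2))).
Qed.

Lemma integrand_abs_le (t : R) : 0 <= t <= 1 -> Rabs (integrand t) <= Rabs z / denom_lb.
Proof.
  intros Ht. pose proof (denom_lb_le t Ht). pose proof denom_lb_pos.
  assert (Hd : 0 < 1 - geom_ratio t) by lra.
  unfold integrand. rewrite Rabs_div, Rabs_mult, (Rabs_pos_eq ((1 - t) ^ 2)), (Rabs_pos_eq (1 - _))
    by (apply pow2_ge_0 || lra).
  unfold Rdiv. rewrite Rmult_assoc. apply Rmult_le_compat_l; [apply Rabs_pos|].
  assert (0 <= (1 - t) ^ 2 <= 1) by (split; [apply pow2_ge_0 | nra]).
  apply Rle_trans with (/ (1 - geom_ratio t)).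
  - assert (0 < / (1 - geom_ratio t)) by (apply Rinv_0_lt_compat; lra). nra.
  - apply Rinv_le_contravar; lra.
Qed.

Lemma geom_ratio_abs_le (t : R) : 0 <= t <= 1 -> Rabs (geom_ratio t) <= 27/4 * (t * (1 - t) ^ 2).
Proof.
  intros Ht. destruct (mul_sqr_1m_bounds t Ht).
  unfold geom_ratio. rewrite Rmult_assoc, Rabs_mult, (Rabs_pos_eq (t * _)) by lra.
  apply Rmult_le_compat_r; [lra | apply Rabs_le; lra].
Qed.

Lemma remainder_abs_le (n : nat) : Rabs (remainder n) <= Rabs z / denom_lb * beta_bound n.
Proof.
  pose proof denom_lb_pos.
  apply (norm_RInt_le (fun t => integrand t * geom_ratio t ^ n)
    (fun t => Rabs z / denom_lb * (27/4) ^ n * (t ^ n * (1 - t) ^ (2 * n))) 0 1);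
    [lra | | apply remainder_correct |].
  - intros t Ht. change (norm ?u) with (Rabs u).
    rewrite Rabs_mult, <- RPow_abs, pow_mult, <- Rpow_mult_distr, Rmult_assoc, <- Rpow_mult_distr.
    apply Rmult_le_compat; try apply Rabs_pos; [apply pow_le, Rabs_pos | apply integrand_abs_le; lra|].
    apply pow_incr. split; [apply Rabs_pos | apply geom_ratio_abs_le; lra].
  - unfold beta_bound. rewrite <- Rmult_assoc.
    exact (is_RInt_scal _ _ _ _ _ (is_RInt_beta n (2 * n))).
Qed.

Lemma remainder_lim : is_lim_seq remainder 0.
Proof.
  apply is_lim_seq_abs_0.
  apply (is_lim_seq_le_le (fun _ => 0) _ (fun n => Rabs z / denom_lb * beta_bound n)).
  - intros n. split; [apply Rabs_pos | apply remainder_abs_le].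
  - apply is_lim_seq_const.
  - replace (Finite 0) with (Rbar_mult (Rabs z / denom_lb) 0) by (simpl; f_equal; ring).
    apply is_lim_seq_scal_l, beta_bound_lim.
Qed.

Lemma is_series_beta_integral (I : R) : is_RInt integrand 0 1 I ->
  is_series (fun n => z ^ S n * beta n (2 * n + 2)) I.
Proof.
  intros HI.
  replace I with (remainder O).
  - apply is_series_telescope; [|exact remainder_lim].
    intros n. symmetry. apply remainder_sub_S.
  - apply (is_RInt_R_unique integrand 0 1); [|exact HI].
    apply (is_RInt_ext (fun t => integrand t * geom_ratio t ^ 0)); [intros t _; R_eq; ring|].
    apply remainder_correct.
Qed.

End GeometricUnderIntegral.

Lemma term_S_eq (x y : R) (n : nat) : x + y <> 0 ->
  term x y (S n) = (27 * x * y / (x + y) ^ 2) ^ S n * beta n (2 * n + 2).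
Proof.
  intros Hxy. unfold term, beta, Binomial.C.
  replace (3 * S n - S n)%nat with (2 * n + 2)%nat by lia.
  replace (n + (2 * n + 2) + 1)%nat with (3 * S n)%nat by lia.
  rewrite fact_simpl, mult_INR, pow_mult.
  unfold Rdiv. rewrite (Rpow_mult_distr (27 * x * y)), pow_inv.
  field. repeat split; try apply INR_fact_neq_0; try (apply not_0_INR; lia).
  apply pow_nonzero, pow_nonzero, Hxy.
Qed.

(** * A triple arctangent identity *)

Lemma sqrt3_pos : 0 < sqrt 3.
Proof. apply sqrt_lt_R0. lra. Qed.

Lemma sqrt3_sqr : sqrt 3 * sqrt 3 = 3.
Proof. apply sqrt_sqrt. lra. Qed.

Definition atan_arg (r t : R) : R := (6 * r * t + r ^ 2 - 4 * r + 1) / (3 * (r + 1) * (r - 1)).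

Definition triple_defect (r : R) : R :=
  atan (sqrt 3 * atan_arg r 1) - atan (sqrt 3 * atan_arg r 0) - 3 * atan (sqrt 3 / (2 * r - 1)).

Lemma triple_defect_derive (r : R) : r - 1 <> 0 -> r + 1 <> 0 -> 2 * r - 1 <> 0 ->
  is_derive triple_defect r 0.
Proof.
  intros H1 H2 H3.
  assert (0 < ((r + 1) * (r - 1)) ^ 2) by (apply pow2_pos, Rmult_integral_contrapositive; tauto).
  assert (D1 : is_derive (fun r => atan_arg r 1) r (-2 / (3 * (r - 1) ^ 2))).
  { unfold atan_arg. auto_derive; [nra|]. R_eq. field. nra. }
  assert (D0 : is_derive (fun r => atan_arg r 0) r (4 * (r ^ 2 - r + 1) / (3 * ((r + 1) * (r - 1)) ^ 2))).
  { unfold atan_arg. auto_derive; [nra|]. R_eq. field. nra. }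
  assert (DV : is_derive (fun r => / (2 * r - 1)) r (-2 / (2 * r - 1) ^ 2)).
  { auto_derive; [exact H3|]. R_eq. field. exact H3. }
  pose proof (is_derive_minus _ _ _ _ _
    (is_derive_minus _ _ _ _ _ (is_derive_atan_sqrt3 _ _ _ D1) (is_derive_atan_sqrt3 _ _ _ D0))
    (is_derive_scal _ _ 3 _ (is_derive_atan_sqrt3 _ _ _ DV))) as D.
  cbn beta in D.
  match type of D with is_derive _ _ ?d => assert (E : d = 0) end.
  { repeat change (minus ?a ?b) with (a - b). change (scal ?a ?b) with (a * b).
    unfold atan_arg. R_eq. field. repeat split; try nra. }
  rewrite E in D. exact D.
Qed.

Lemma triple_defect_at_2 : triple_defect 2 = 0.
Proof.
  pose proof sqrt3_sqr. pose proof sqrt3_pos. pose proof PI_RGT_0.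
  unfold triple_defect, atan_arg.
  replace (sqrt 3 * ((6 * 2 * 1 + 2 ^ 2 - 4 * 2 + 1) / (3 * (2 + 1) * (2 - 1)))) with (tan (PI / 3))
    by (rewrite tan_PI3; field).
  replace (sqrt 3 * ((6 * 2 * 0 + 2 ^ 2 - 4 * 2 + 1) / (3 * (2 + 1) * (2 - 1)))) with (- tan (PI / 6))
    by (rewrite tan_PI6; field_simplify_eq; [nra | lra]).
  replace (sqrt 3 / (2 * 2 - 1)) with (tan (PI / 6))
    by (rewrite tan_PI6; field_simplify_eq; [nra | lra]).
  rewrite atan_opp, !atan_tan; lra.
Qed.

Lemma tan_PI12 : tan (PI / 3 - PI / 4) = 2 - sqrt 3.
Proof.
  pose proof sqrt3_sqr. pose proof sqrt3_pos. pose proof PI_RGT_0.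
  rewrite tan_minus, tan_PI3, tan_PI4.
  - field_simplify_eq; [nra | lra].
  - rewrite cos_PI3. lra.
  - rewrite cos_PI4. apply Rgt_not_eq, Rdiv_lt_0_compat; [lra | apply sqrt_lt_R0; lra].
  - apply Rgt_not_eq, cos_gt_0; lra.
  - rewrite tan_PI3, tan_PI4. lra.
Qed.

Lemma triple_defect_at_m1_msqrt3 : triple_defect (- (1 + sqrt 3)) = 0.
Proof.
  pose proof sqrt3_sqr. pose proof sqrt3_pos. pose proof PI_RGT_0.
  set (r := - (1 + sqrt 3)).
  unfold triple_defect, atan_arg.
  replace (sqrt 3 * ((6 * r * 1 + r ^ 2 - 4 * r + 1) / (3 * (r + 1) * (r - 1)))) with (tan (PI / 3 - PI / 4))
    by (rewrite tan_PI12; unfold r; field_simplify_eq; [nra | lra]).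
  replace (sqrt 3 * ((6 * r * 0 + r ^ 2 - 4 * r + 1) / (3 * (r + 1) * (r - 1)))) with (tan (PI / 3))
    by (rewrite tan_PI3; unfold r; field_simplify_eq; [nra | lra]).
  replace (sqrt 3 / (2 * r - 1)) with (- tan (PI / 3 - PI / 4))
    by (rewrite tan_PI12; unfold r; field_simplify_eq; [nra | lra]).
  rewrite atan_opp, !atan_tan; lra.
Qed.

Lemma atan_triple (r : R) : 1 < r \/ r < -1 ->
  atan (sqrt 3 * atan_arg r 1) - atan (sqrt 3 * atan_arg r 0) = 3 * atan (sqrt 3 / (2 * r - 1)).
Proof.
  intros Hr. pose proof sqrt3_pos.
  enough (triple_defect r = 0) by (unfold triple_defect in *; lra).
  destruct Hr as [Hr|Hr].
  - rewrite <- triple_defect_at_2. apply is_derive_0_eq. intros u Hu.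
    assert (1 < Rmin 2 r) by (apply Rmin_glb_lt; lra).
    apply triple_defect_derive; lra.
  - rewrite <- triple_defect_at_m1_msqrt3. apply is_derive_0_eq. intros u Hu.
    assert (Rmax (- (1 + sqrt 3)) r < -1) by (apply Rmax_lub_lt; lra).
    apply triple_defect_derive; lra.
Qed.

(** * Evaluation of the integral *)

Definition quad (r t : R) : R :=
  9 * r ^ 2 * t ^ 2 + 3 * r * (r ^ 2 - 4 * r + 1) * t + (r ^ 2 - r + 1) ^ 2.

(* Partial fractions along the factorisation [denominator_factor] below. *)
Definition log_part (r t : R) : R :=
  - (r ^ 2 - r + 1) / (6 * (r ^ 2 + r + 1)) * ln ((3 * r * t - (r + 1) ^ 2) ^ 2)
  - (r + 1) ^ 2 / (3 * (r ^ 2 + r + 1)) * ln (quad r t).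

Definition antideriv (r t : R) : R :=
  log_part r t + 2 * r * (r + 1) / (sqrt 3 * (r - 1) * (r ^ 2 + r + 1)) * atan (sqrt 3 * atan_arg r t).

Definition closed_form (r : R) : R :=
  r / (r ^ 3 - 1) * (2 * sqrt 3 * (r + 1) * atan (sqrt 3 / (2 * r - 1))
    + (r - 1) * ln ((r ^ 3 + 1) / (r + 1) ^ 3)).

Lemma denominator_factor (r t : R) :
  (1 + r ^ 3) ^ 2 - 27 * r ^ 3 * t * (1 - t) ^ 2 = ((r + 1) ^ 2 - 3 * r * t) * quad r t.
Proof. unfold quad. ring. Qed.

Section ClosedForm.

Variable r : R.
Hypothesis Hr : 1 < r \/ r < -1.

Lemma quad_pos (t : R) : 0 < quad r t.
Proof.
  assert (0 < ((r + 1) * (r - 1)) ^ 2) by (apply pow2_pos; destruct Hr; nra).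
  assert (E : quad r t = (3 * r * t + (r ^ 2 - 4 * r + 1) / 2) ^ 2 + 3 / 4 * ((r + 1) * (r - 1)) ^ 2)
    by (unfold quad; field).
  rewrite E. pose proof (pow2_ge_0 (3 * r * t + (r ^ 2 - 4 * r + 1) / 2)). lra.
Qed.

Lemma linear_factor_pos (t : R) : 0 <= t <= 1 -> 0 < (r + 1) ^ 2 - 3 * r * t.
Proof. intros Ht. destruct Hr; nra. Qed.

Lemma antideriv_derive (t : R) : 0 <= t <= 1 ->
  is_derive (antideriv r) t (integrand (27 * r ^ 3 / (1 + r ^ 3) ^ 2) t).
Proof.
  intros Ht.
  pose proof (quad_pos t). pose proof (linear_factor_pos t Ht). pose proof sqrt3_pos.
  assert (0 < r ^ 2 + r + 1) by nra.
  assert (r - 1 <> 0 /\ r + 1 <> 0 /\ 1 + r ^ 3 <> 0) as (Hm & Hp & Hc) by (destruct Hr; repeat split; nra).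
  assert (Hden : 0 < (1 + r ^ 3) ^ 2 - 27 * r ^ 3 * t * (1 - t) ^ 2)
    by (rewrite denominator_factor; nra).
  evar (dl : R).
  assert (DL : is_derive (log_part r) t dl).
  { unfold log_part, quad in *. auto_derive; [|unfold dl; reflexivity].
    repeat split; try lra. apply pow2_pos. lra. }
  assert (DY : is_derive (atan_arg r) t (6 * r / (3 * (r + 1) * (r - 1)))).
  { unfold atan_arg. auto_derive; [nra|]. R_eq. field. split; assumption. }
  pose proof (is_derive_plus _ _ _ _ _ DL
    (is_derive_scal _ _ (2 * r * (r + 1) / (sqrt 3 * (r - 1) * (r ^ 2 + r + 1))) _
      (is_derive_atan_sqrt3 _ _ _ DY))) as D.
  cbn beta in D.
  match type of D with
  | is_derive _ _ ?d => assert (E : d = integrand (27 * r ^ 3 / (1 + r ^ 3) ^ 2) t)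
  end.
  { change (plus ?a ?b) with (a + b). change (scal ?a ?b) with (a * b).
    unfold dl, integrand, geom_ratio, atan_arg, quad in *. R_eq.
    field. repeat split; lra. }
  rewrite E in D. exact D.
Qed.

Lemma antideriv_1_sub_0 : antideriv r 1 - antideriv r 0 = closed_form r.
Proof.
  pose proof sqrt3_pos.
  assert (Hm : 0 < r ^ 2 - r + 1) by nra.
  assert (Hn : 0 < r ^ 2 + r + 1) by nra.
  assert (r - 1 <> 0 /\ 2 * r - 1 <> 0 /\ r ^ 3 - 1 <> 0) as (H1 & H2 & H3)
    by (destruct Hr; repeat split; nra).
  assert (Hp : 0 < (r + 1) ^ 2) by (apply pow2_pos; destruct Hr; lra).
  unfold antideriv, log_part, closed_form.
  replace ((3 * r * 1 - (r + 1) ^ 2) ^ 2) with ((r ^ 2 - r + 1) * (r ^ 2 - r + 1)) by ring.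
  replace ((3 * r * 0 - (r + 1) ^ 2) ^ 2) with ((r + 1) ^ 2 * (r + 1) ^ 2) by ring.
  replace (quad r 1) with ((r + 1) ^ 2 * (r ^ 2 - r + 1)) by (unfold quad; ring).
  replace (quad r 0) with ((r ^ 2 - r + 1) * (r ^ 2 - r + 1)) by (unfold quad; ring).
  replace ((r ^ 3 + 1) / (r + 1) ^ 3) with ((r ^ 2 - r + 1) * / (r + 1) ^ 2)
    by (field; destruct Hr; lra).
  rewrite !ln_mult, ln_Rinv by (try apply Rinv_0_lt_compat; lra).
  pose proof (atan_triple r Hr) as T.
  replace (atan (sqrt 3 * atan_arg r 1)) with (atan (sqrt 3 * atan_arg r 0) + 3 * atan (sqrt 3 / (2 * r - 1)))
    by lra.
  replace (2 * r * (r + 1) / (sqrt 3 * (r - 1) * (r ^ 2 + r + 1)))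
    with (2 * sqrt 3 * r * (r + 1) / (sqrt 3 * sqrt 3 * (r - 1) * (r ^ 2 + r + 1)))
    by (field; repeat split; lra).
  rewrite sqrt3_sqr. field. repeat split; lra.
Qed.

Lemma is_RInt_closed_form : is_RInt (integrand (27 * r ^ 3 / (1 + r ^ 3) ^ 2)) 0 1 (closed_form r).
Proof.
  rewrite <- antideriv_1_sub_0.
  apply (is_RInt_derive (antideriv r)); intros t Ht; rewrite Rmin_left, Rmax_right in Ht by lra.
  - now apply antideriv_derive.
  - assert (1 + r ^ 3 <> 0) by (destruct Hr; nra).
    assert (0 < (1 + r ^ 3) ^ 2 - 27 * r ^ 3 * t * (1 - t) ^ 2)
      by (rewrite denominator_factor; pose proof (quad_pos t); pose proof (linear_factor_pos t Ht); nra).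
    apply integrand_continuous. unfold geom_ratio. intros E.
    assert (Ed : (1 + r ^ 3) ^ 2 - 27 * r ^ 3 * t * (1 - t) ^ 2
                 = (1 + r ^ 3) ^ 2 * (1 - 27 * r ^ 3 / (1 + r ^ 3) ^ 2 * t * (1 - t) ^ 2))
      by (field; assumption).
    rewrite E, Rminus_diag, Rmult_0_r in Ed. lra.
Qed.

End ClosedForm.

(** * Cube roots *)

Lemma pow3_lt (a b : R) : a < b -> a ^ 3 < b ^ 3.
Proof.
  intros H.
  assert (0 < a ^ 2 + a * b + b ^ 2) by (pose proof (pow2_ge_0 (a + b)); nra).
  replace (b ^ 3) with (a ^ 3 + (b - a) * (a ^ 2 + a * b + b ^ 2)) by ring.
  assert (0 < (b - a) * (a ^ 2 + a * b + b ^ 2)) by (apply Rmult_lt_0_compat; lra).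
  lra.
Qed.

Lemma pow3_inj (a b : R) : a ^ 3 = b ^ 3 -> a = b.
Proof.
  intros H. destruct (Rtotal_order a b) as [Hlt|[Heq|Hgt]]; [|exact Heq|].
  - apply pow3_lt in Hlt. lra.
  - apply pow3_lt in Hgt. lra.
Qed.

Lemma cbrt_cube (t : R) : cbrt t ^ 3 = t.
Proof.
  assert (Hpow : forall u, 0 < u -> Rpower u (1/3) ^ 3 = u).
  { intros u Hu. rewrite <- Rpower_pow, Rpower_mult by apply exp_pos.
    replace (1 / 3 * INR 3) with 1 by (simpl; field). now apply Rpower_1. }
  unfold cbrt. destruct (Rlt_dec 0 t) as [Hpos|Hpos]; [now apply Hpow|].
  destruct (Rlt_dec t 0) as [Hneg|Hneg].
  - replace ((- Rpower (- t) (1 / 3)) ^ 3) with (- Rpower (- t) (1 / 3) ^ 3) by ring.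
    rewrite Hpow; lra.
  - replace t with 0 by lra. ring.
Qed.

Lemma cbrt_mult (x y : R) : cbrt (x * y) = cbrt x * cbrt y.
Proof. apply pow3_inj. now rewrite cbrt_cube, Rpow_mult_distr, !cbrt_cube. Qed.

Lemma cube_ratio_branches (r : R) : 1 < r ^ 3 \/ r ^ 3 < -1 -> 1 < r \/ r < -1.
Proof.
  intros [H|H].
  - left. destruct (Rle_or_lt r 1) as [Hr|Hr]; [|exact Hr].
    destruct (Req_dec r 1) as [E|E]; [subst; lra|].
    pose proof (pow3_lt r 1 ltac:(lra)). lra.
  - right. destruct (Rle_or_lt (-1) r) as [Hr|Hr]; [|exact Hr].
    destruct (Req_dec r (-1)) as [E|E]; [subst; lra|].
    pose proof (pow3_lt (-1) r ltac:(lra)). lra.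
Qed.

Lemma convergence_range (u : R) : 1 < u \/ u <= - (sqrt 2 + 1) ^ 2 ->
  -27/4 <= 27 * u / (1 + u) ^ 2 < 27/4.
Proof.
  intros Hu.
  pose proof (sqrt_lt_R0 2 ltac:(lra)). pose proof (sqrt_sqrt 2 ltac:(lra)).
  assert (Hd : 0 < (1 + u) ^ 2) by (apply pow2_pos; destruct Hu; nra).
  assert (H1 : 0 < (1 - u) ^ 2) by (apply pow2_pos; destruct Hu; nra).
  (* -27/4 <= z reads (u + 3)^2 >= 8, i.e. u + 3 <= -2 sqrt 2 on the negative branch *)
  assert (H2 : 0 <= (1 + u) ^ 2 + 4 * u) by (destruct Hu; nra).
  assert (E : 27 * u / (1 + u) ^ 2 * (1 + u) ^ 2 = 27 * u) by (field; lra).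
  split; [apply (Rmult_le_reg_r ((1 + u) ^ 2)) | apply (Rmult_lt_reg_r ((1 + u) ^ 2))];
    rewrite ?E; lra.
Qed.

Lemma closed_form_homogeneous (r b : R) : b <> 0 -> 1 < r \/ r < -1 ->
  r * b * b / ((r * b) ^ 3 - b ^ 3) *
    (2 * sqrt 3 * (r * b + b) * atan (sqrt 3 * b / (2 * (r * b) - b))
     + (r * b - b) * ln (((r * b) ^ 3 + b ^ 3) / (r * b + b) ^ 3))
  = closed_form r.
Proof.
  intros Hb Hr. unfold closed_form.
  assert (2 * r - 1 <> 0 /\ r + 1 <> 0 /\ r ^ 3 - 1 <> 0 /\ b ^ 3 <> 0) as (H1 & H2 & H3 & H4)
    by (repeat split; try (destruct Hr; nra); now apply pow_nonzero).
  replace (2 * (r * b) - b) with (b * (2 * r - 1)) by ring.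
  replace (r * b + b) with (b * (r + 1)) by ring.
  replace ((r * b) ^ 3 + b ^ 3) with (b ^ 3 * (r ^ 3 + 1)) by ring.
  replace ((r * b) ^ 3 - b ^ 3) with (b ^ 3 * (r ^ 3 - 1)) by ring.
  replace (sqrt 3 * b / (b * (2 * r - 1))) with (sqrt 3 / (2 * r - 1)) by (field; tauto).
  replace (b ^ 3 * (r ^ 3 + 1) / (b * (r + 1)) ^ 3) with ((r ^ 3 + 1) / (r + 1) ^ 3)
    by (rewrite Rpow_mult_distr; field; tauto).
  field. tauto.
Qed.

Lemma term_S_homogeneous (r b : R) (n : nat) : b <> 0 -> 1 < r \/ r < -1 ->
  term ((r * b) ^ 3) (b ^ 3) (S n) = (27 * r ^ 3 / (1 + r ^ 3) ^ 2) ^ S n * beta n (2 * n + 2).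
Proof.
  intros Hb Hr.
  assert (H3 : 1 + r ^ 3 <> 0) by (destruct Hr; nra).
  assert (Hs : (r * b) ^ 3 + b ^ 3 <> 0).
  { replace ((r * b) ^ 3 + b ^ 3) with (b ^ 3 * (1 + r ^ 3)) by ring.
    apply Rmult_integral_contrapositive. split; [now apply pow_nonzero | exact H3]. }
  rewrite (term_S_eq _ _ _ Hs). do 2 f_equal.
  field. tauto.
Qed.

Theorem mainTheorem2 (x y : R) :
  y <> 0 ->
  (x / y > 1 \/ x / y <= - (sqrt 2 + 1) ^ 2) ->
  is_series (fun n : nat => term x y (S n))
    (cbrt (x * y) / (x - y) *
      (2 * sqrt 3 * (cbrt x + cbrt y) *
         atan (sqrt 3 * cbrt y / (2 * cbrt x - cbrt y))
       + (cbrt x - cbrt y) * ln ((x + y) / (cbrt x + cbrt y) ^ 3))).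
Proof.
  intros Hy Hxy.
  rewrite cbrt_mult.
  pose proof (cbrt_cube x) as Ex. pose proof (cbrt_cube y) as Ey.
  set (a := cbrt x) in *. set (b := cbrt y) in *. clearbody a b. subst x y.
  assert (Hb : b <> 0) by (intros ->; apply Hy; ring).
  assert (Ea : a = a / b * b) by (field; exact Hb).
  set (r := a / b) in Ea. clearbody r. subst a.
  replace ((r * b) ^ 3 / b ^ 3) with (r ^ 3) in Hxy by (field; exact Hb).
  assert (Hr : 1 < r \/ r < -1).
  { apply cube_ratio_branches. pose proof (sqrt_lt_R0 2 ltac:(lra)). destruct Hxy; [left | right]; nra. }
  rewrite closed_form_homogeneous by assumption.
  apply (is_series_ext _ _ _ (fun n => eq_sym (term_S_homogeneous r b n Hb Hr))).
  apply is_series_beta_integral, is_RInt_closed_form, Hr.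
  apply convergence_range. destruct Hxy; [left | right]; lra.
Qed.
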